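(* Let $\eta_w>0$, $\lambda\in[0,1]$, and let $\theta_1,\dots,\theta_T\in\Theta$ satisfy $\theta_{t+1}=\arg\min_{\theta\in\Theta}\{\eta_w\langle\tilde g_t,\theta-\theta_t\rangle+\frac12\|\theta-\theta_t\|_2^2\}$ with $\tilde g_t=\nabla\ell(\theta_t,z_t)$ for some samples $z_t\in\mathcal Z$. If $S$ is a $0.4\lambda$-dominant set at $\theta_t$ for some $t\in[T]$, then for any non-negative integer $\sigma'\le\min\{\lfloor\frac{0.1\lambda}{\eta_wG^2}\rfloor,T-t\}$, $S$ is also a $0.2\lambda$-dominant set at $\theta_{t+\sigma'}$.
   Context: $\Theta\subset\mathbb{R}^n$ is compact and convex; $\ell:\Theta\times\mathcal Z\to[0,1]$ is convex and $G$-Lipschitz in its first argument (so its (sub)gradients in $\theta$ have $\ell_2$-norm at most $G$); $\mathcal P_1,\dots,\mathcal P_K$ are distributions on $\mathcal Z$ and $R_i(\theta)=\mathbb E_{z\sim\mathcal P_i}\ell(\theta,z)$. For $\mu\ge0$, a nonempty $S\subseteq[K]$ is $\mu$-dominant at $\theta$ if $\min_{i\in S}R_i(\theta)\ge R_j(\theta)+\mu$ for all $j\in[K]\setminus S$. *)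

From HB Require Import structures.
From mathcomp Require Import all_boot all_order all_algebra.
From mathcomp Require Import all_classical all_reals all_analysis.
Set Implicit Arguments. Unset Strict Implicit. Unset Printing Implicit Defensive.
Import Order.TTheory GRing.Theory Num.Theory.
Import numFieldNormedType.Exports.
Local Open Scope classical_set_scope.
Local Open Scope ring_scope.

Definition dotv (R : realType) (n : nat) (u v : 'rV[R]_n) : R :=
  \sum_(i < n) u ord0 i * v ord0 i.
Definition norm2sq (R : realType) (n : nat) (u : 'rV[R]_n) : R := dotv u u.
Definition norm2 (R : realType) (n : nat) (u : 'rV[R]_n) : R :=
  Num.sqrt (norm2sq u).

Definition risk (R : realType) (n : nat) (d : measure_display)
  (Z : measurableType d) (l : 'rV[R]_n -> Z -> R) (P : probability Z R)
  (th : 'rV[R]_n) : R :=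
  fine (\int[P]_z (l th z)%:E)%E.

Definition dominant (R : realType) (n : nat) (d : measure_display)
  (Z : measurableType d) (l : 'rV[R]_n -> Z -> R) (K : nat)
  (P : 'I_K -> probability Z R) (mu : R) (S : {set 'I_K}) (th : 'rV[R]_n)
  : Prop :=
  S != finset.set0 /\
  forall i j, i \in S -> j \notin S -> risk l (P j) th + mu <= risk l (P i) th.

From HB Require Import structures.
From mathcomp Require Import all_boot all_order all_algebra.
From mathcomp Require Import all_classical all_reals all_analysis.
From mathcomp Require Import ring lra zify measurable_realfun.
Import Order.TTheory GRing.Theory Num.Theory.
Import numFieldNormedType.Exports.
Local Open Scope classical_set_scope.
Local Open Scope ring_scope.

Set Implicit Arguments.
Unset Strict Implicit.

(* One projected step moves the iterate by at most eta * G: comparing the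
   minimiser y with the points of the segment from the previous iterate x
   gives a * |y - x|^2 <= eta^2 |g|^2 for every a < 1.  The loss is
   G-Lipschitz, hence so is every risk, so a step changes every risk by at
   most eta * G^2 and sigma' steps by at most 0.1 lambda; a dominance gap of
   0.4 lambda therefore loses at most 2 * 0.1 lambda. *)

Section EuclideanRowVectors.
Context {R : realType} {n : nat}.
Implicit Types (u v : 'rV[R]_n) (a : R).

Lemma dotvZl a u v : dotv (a *: u) v = a * dotv u v.
Proof. by rewrite /dotv mulr_sumr; apply: eq_bigr => i _; rewrite mxE mulrA. Qed.

Lemma dotvZr a u v : dotv u (a *: v) = a * dotv u v.
Proof. by rewrite /dotv mulr_sumr; apply: eq_bigr => i _; rewrite mxE mulrCA. Qed.

Lemma norm2sqZ a v : norm2sq (a *: v) = a ^+ 2 * norm2sq v.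
Proof. by rewrite /norm2sq dotvZl dotvZr mulrA -expr2. Qed.

Lemma norm2sqD u v :
  norm2sq (u + v) = norm2sq u + 2 * dotv u v + norm2sq v.
Proof.
rewrite /norm2sq /dotv mulr_sumr -!big_split; apply: eq_bigr => i _ /=.
by rewrite !mxE; ring.
Qed.

Lemma norm2sq_ge0 v : 0 <= norm2sq v.
Proof. by apply: sumr_ge0 => i _; rewrite -expr2 sqr_ge0. Qed.

Lemma norm2_ge0 v : 0 <= norm2 v.
Proof. exact: sqrtr_ge0. Qed.

Lemma sqr_norm2 v : norm2 v ^+ 2 = norm2sq v.
Proof. exact/sqr_sqrtr/norm2sq_ge0. Qed.

Lemma norm2_le_sqr v c : 0 <= c -> norm2sq v <= c ^+ 2 -> norm2 v <= c.
Proof.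
by move=> c0; rewrite -sqr_norm2 ler_pXn2r // nnegrE ?norm2_ge0.
Qed.

End EuclideanRowVectors.

Lemma ler_of_mulr_lt1 (R : realFieldType) (D E : R) :
  0 <= E -> (forall a, 0 <= a < 1 -> a * D <= E) -> D <= E.
Proof.
move=> E0 aDE; rewrite leNgt; apply/negP => ltED.
have D0 : 0 < D := le_lt_trans E0 ltED.
have [ltEm ltmD] := midf_lt ltED.
have a_range : 0 <= (E + D) / 2 / D < 1.
  have m0 : 0 <= (E + D) / 2 := ltW (le_lt_trans E0 ltEm).
  by rewrite ltr_pdivrMr // mul1r ltmD divr_ge0 // ltW.
by have := aDE _ a_range; rewrite divfK ?gt_eqF // leNgt ltEm.
Qed.

Section ProximalStep.
Context {R : realType} {n : nat} {A : set 'rV[R]_n}.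
Context {x y g : 'rV[R]_n} {eta : R}.
Hypotheses (convA : convex_set A) (Ax : A x) (Ay : A y).
Hypothesis y_min : forall z, A z ->
  eta * dotv g (y - x) + 2^-1 * norm2sq (y - x)
  <= eta * dotv g (z - x) + 2^-1 * norm2sq (z - x).

Lemma prox_step_norm2sq : norm2sq (y - x) <= eta ^+ 2 * norm2sq g.
Proof.
apply: ler_of_mulr_lt1; first by rewrite mulr_ge0 ?sqr_ge0 ?norm2sq_ge0.
move=> a /andP[a0 a1].
have Aa : A (a *: y + (1 - a) *: x).
  by rewrite -inE; apply: (convA (Itv01 a0 (ltW a1))); rewrite inE.
have seg : a *: y + (1 - a) *: x - x = a *: (y - x).
  by rewrite scalerBl scale1r scalerBr addrA addrAC addrK.
have := y_min Aa; rewrite seg dotvZr norm2sqZ => min_a.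
have sq := norm2sq_ge0 (eta *: g + (y - x)).
rewrite norm2sqD norm2sqZ dotvZl in sq.
set D := norm2sq (y - x) in min_a sq *; set p := dotv g (y - x) in min_a sq.
have opt : eta * p <= - (1 + a) / 2 * D.
  rewrite -(ler_pM2l (_ : 0 < 1 - a)) ?subr_gt0 //; nra.
nra.
Qed.

Lemma prox_step_norm2 : 0 <= eta -> norm2 (y - x) <= eta * norm2 g.
Proof.
move=> eta0; apply: norm2_le_sqr; first by rewrite mulr_ge0 ?norm2_ge0.
by rewrite exprMn sqr_norm2 prox_step_norm2sq.
Qed.

End ProximalStep.

Section RiskLipschitz.
Context {R : realType} {d : measure_display} {Z : measurableType d}.
Variable P : probability Z R.

Let integral_cst1 (c : \bar R) : (\int[P]_z cst c z = c)%E.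
Proof.
by rewrite integral_cst // -[RHS]mule1; congr (_ * _)%E; exact: probability_setT.
Qed.

Let unit_valued (f : Z -> R) := forall z, 0 <= f z <= 1.

Lemma integral_unit_valued_fin_num (f : Z -> R) :
  measurable_fun setT f -> unit_valued f -> (\int[P]_z (f z)%:E)%E \is a fin_num.
Proof.
move=> mf f01; have f0 z : (0 <= (f z)%:E)%E by rewrite lee_fin; case/andP: (f01 z).
rewrite ge0_fin_numE ?integral_ge0 //.
apply: (@le_lt_trans _ _ (\int[P]_z (cst 1%E z))%E); last first.
  by rewrite integral_cst1 ltry.
apply: ge0_le_integral => //; first exact/measurable_EFinP.
by move=> z _; rewrite lee_fin; case/andP: (f01 z).
Qed.

Lemma fine_integral_le_addr (f h : Z -> R) (c : R) :
  measurable_fun setT f -> measurable_fun setT h ->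
  unit_valued f -> unit_valued h -> 0 <= c -> (forall z, f z <= h z + c) ->
  fine (\int[P]_z (f z)%:E)%E <= fine (\int[P]_z (h z)%:E)%E + c.
Proof.
move=> mf mh f01 h01 c0 fhc.
have f0 z : (0 <= (f z)%:E)%E by rewrite lee_fin; case/andP: (f01 z).
have h0 z : (0 <= (h z)%:E)%E by rewrite lee_fin; case/andP: (h01 z).
have int_hc : (\int[P]_z ((h z)%:E + c%:E) = \int[P]_z (h z)%:E + c%:E)%E.
  rewrite ge0_integralD //; last exact/measurable_EFinP.
  by rewrite integral_cst1.
have : (\int[P]_z (f z)%:E <= \int[P]_z (h z)%:E + c%:E)%E.
  rewrite -int_hc; apply: ge0_le_integral => //.
  - exact/measurable_EFinP.
  - by apply: emeasurable_funD; exact/measurable_EFinP.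
  - by move=> z _; rewrite -EFinD lee_fin.
rewrite -(fineK (integral_unit_valued_fin_num mh h01)) -EFinD.
by rewrite -(fineK (integral_unit_valued_fin_num mf f01)) lee_fin.
Qed.

Lemma fine_integral_dist_le (f h : Z -> R) (c : R) :
  measurable_fun setT f -> measurable_fun setT h ->
  unit_valued f -> unit_valued h -> 0 <= c -> (forall z, `|f z - h z| <= c) ->
  `|fine (\int[P]_z (f z)%:E)%E - fine (\int[P]_z (h z)%:E)%E| <= c.
Proof.
move=> mf mh f01 h01 c0 fhc.
have fh : fine (\int[P]_z (f z)%:E)%E <= fine (\int[P]_z (h z)%:E)%E + c.
  apply: fine_integral_le_addr => // z.
  by have := fhc z; rewrite ler_norml => /andP[_]; lra.
have hf : fine (\int[P]_z (h z)%:E)%E <= fine (\int[P]_z (f z)%:E)%E + c.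
  apply: fine_integral_le_addr => // z.
  by have := fhc z; rewrite ler_norml => /andP[]; lra.
by rewrite ler_norml; apply/andP; split; lra.
Qed.

Lemma risk_lipschitz (n : nat) (A : set 'rV[R]_n) (l : 'rV[R]_n -> Z -> R)
    (G : R) (x y : 'rV[R]_n) :
  0 <= G -> (forall th, A th -> measurable_fun setT (l th)) ->
  (forall th z, A th -> 0 <= l th z <= 1) ->
  (forall z x y, A x -> A y -> `|l x z - l y z| <= G * norm2 (x - y)) ->
  A x -> A y -> `|risk l P x - risk l P y| <= G * norm2 (x - y).
Proof.
move=> G0 ml l01 l_lip Ax Ay.
apply: fine_integral_dist_le; rewrite ?mulr_ge0 ?norm2_ge0 //.
- exact: ml.
- exact: ml.
- by move=> z; apply: l01.
- by move=> z; apply: l01.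
- by move=> z; apply: l_lip.
Qed.

End RiskLipschitz.

Lemma dist_shift_le (R : numDomainType) (u : nat -> R) (c : R) (t k : nat) :
  (forall s, (t <= s < t + k)%N -> `|u s.+1 - u s| <= c) ->
  `|u (t + k)%N - u t| <= k%:R * c.
Proof.
elim: k => [|k IHk] step; first by rewrite addn0 subrr normr0 mul0r.
have -> : u (t + k.+1)%N - u t = (u (t + k)%N - u t) + (u (t + k).+1 - u (t + k)%N).
  by rewrite addnS [RHS]addrC addrA subrK.
rewrite -natr1 mulrDl mul1r; apply: le_trans (ler_normD _ _) _; apply: lerD.
  by apply: IHk => s /andP[ts sk]; apply: step; rewrite ts addnS ltnS ltnW.
by apply: step; rewrite leq_addr addnS ltnS /=.
Qed.

Lemma dominant_perturb (R : realType) (n : nat) (d : measure_display)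
    (Z : measurableType d) (l : 'rV[R]_n -> Z -> R) (K : nat)
    (P : 'I_K -> probability Z R) (mu mu' e : R) (S : {set 'I_K})
    (x y : 'rV[R]_n) :
  mu' + 2 * e <= mu -> (forall i, `|risk l (P i) y - risk l (P i) x| <= e) ->
  dominant l P mu S x -> dominant l P mu' S y.
Proof.
move=> mu_e dist [S0 gap]; split=> // i j iS jS.
have := gap i j iS jS; have := dist i; have := dist j.
by rewrite !ler_norml => /andP[? ?] /andP[? ?]; lra.
Qed.

Theorem lemmaC3 (R : realType) (n : nat) (Th : set 'rV[R]_n)
  (d : measure_display) (Z : measurableType d) (l : 'rV[R]_n -> Z -> R)
  (G : R) (K : nat) (P : 'I_K -> probability Z R)
  (hcompact : compact Th) (hconvex : convex_set Th)
  (hG : 0 < G)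
  (hmeas : forall th, Th th -> measurable_fun setT (l th))
  (hrange : forall th z, Th th -> 0 <= l th z <= 1)
  (hlconv : forall z x y, Th x -> Th y -> forall a : R, 0 <= a <= 1 ->
     l (a *: x + (1 - a) *: y) z <= a * l x z + (1 - a) * l y z)
  (hlip : forall z x y, Th x -> Th y -> `|l x z - l y z| <= G * norm2 (x - y))
  (eta lambda : R) (heta : 0 < eta) (hlam : 0 <= lambda <= 1)
  (T : nat) (theta : nat -> 'rV[R]_n) (zs : nat -> Z) (g : nat -> 'rV[R]_n)
  (htheta : forall t, (1 <= t <= T)%N -> Th (theta t))
  (hsubgrad : forall t, (1 <= t < T)%N ->
     (forall th, Th th -> l (theta t) (zs t) + dotv (g t) (th - theta t) <= l th (zs t))
     /\ norm2 (g t) <= G)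
  (hupdate : forall t, (1 <= t < T)%N ->
     forall th, Th th ->
       eta * dotv (g t) (theta t.+1 - theta t) + 2^-1 * norm2sq (theta t.+1 - theta t)
       <= eta * dotv (g t) (th - theta t) + 2^-1 * norm2sq (th - theta t))
  (S : {set 'I_K}) (t : nat) (ht : (1 <= t <= T)%N)
  (hdom : dominant l P (4/10 * lambda) S (theta t))
  (sigma : nat)
  (hsig1 : (sigma%:Z <= Num.floor (1/10 * lambda / (eta * G ^+ 2)))%R)
  (hsig2 : (sigma <= T - t)%N) :
  dominant l P (2/10 * lambda) S (theta (t + sigma)%N).
Proof.
have G0 : 0 <= G := ltW hG.
set c := eta * G ^+ 2.
have risk_step s i : (t <= s < t + sigma)%N ->
    `|risk l (P i) (theta s.+1) - risk l (P i) (theta s)| <= c.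
  move=> s_range; have s_iter : (1 <= s < T)%N by lia.
  have Ths : Th (theta s) by apply: htheta; lia.
  have Ths1 : Th (theta s.+1) by apply: htheta; lia.
  have [_ gG] := hsubgrad s s_iter.
  have step : norm2 (theta s.+1 - theta s) <= eta * G.
    apply: le_trans (prox_step_norm2 hconvex Ths Ths1 (hupdate s s_iter) (ltW heta)) _.
    by rewrite ler_wpM2l // ltW.
  apply: le_trans (risk_lipschitz (P i) G0 hmeas hrange hlip Ths1 Ths) _.
  by rewrite /c expr2 mulrCA ler_wpM2l.
have drift_le : sigma%:R * c <= 1/10 * lambda.
  by move: hsig1; rewrite floor_ge_int ler_pdivlMr // mulr_gt0 ?exprn_gt0.
have gap : 2/10 * lambda + 2 * (1/10 * lambda) <= 4/10 * lambda by lra.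
apply: dominant_perturb gap _ hdom => i.
apply: le_trans drift_le.
by apply: (dist_shift_le (u := fun s => risk l (P i) (theta s))) => s; apply: risk_step.
Qed.
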